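(* Let $F$ be an algebraically closed field of characteristic zero, $G$ a finite group, $A$ a finite dimensional full $G$-graded algebra over $F$, and $f_0$ a multilinear $G$-graded polynomial which is weakly full of $A$. Then there exists a multilinear $G$-graded strongly full polynomial $f$ of $A$ such that $f\in\langle f_0\rangle_T$.
   Context: Let $A\cong A_1\times\cdots\times A_q\oplus J_A$ be the graded Wedderburn–Malcev decomposition, with $A_i$ $G$-graded simple and $J_A$ the Jacobson radical; $A$ is full if, up to permuting indices, $A_1J_AA_2\cdots J_AA_q\neq0$. Fix a homogeneous basis of $A$ consisting of homogeneous bases of each $A_i$ (elements of the form $u_h\otimes e_{r,s}$ from the standard presentation of graded simple algebras) together with a homogeneous basis of $J_A$; an evaluation of a multilinear $G$-graded polynomial is admissible if each variable is assigned a basis element of its own degree. A multilinear $G$-graded polynomial is weakly full of $A$ if it has a nonzero admissible evaluation visiting every graded simple component $A_i$; it is strongly full of $A$ if it is a nonidentity of $A$ and every basis element of $A_{ss}$ occurs as a value in every nonzero admissible evaluation. $\langle f_0\rangle_T$ is the $G$-graded $T$-ideal generated by $f_0$. *)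

From HB Require Import structures.
From mathcomp Require Import all_boot all_order all_fingroup all_algebra.
Set Implicit Arguments. Unset Strict Implicit. Unset Printing Implicit Defensive.
Import GRing.Theory.
Local Open Scope ring_scope.

Section Algebra.
Variables (F : fieldType) (G : finGroupType) (V : vectType F).
Variable mul : V -> V -> V.

Definition assoc_bilinear : Prop :=
  [/\ forall a, linear (mul a), forall b, linear (mul^~ b)
    & forall a b c, mul a (mul b c) = mul (mul a b) c].

Definition graded_algebra (deg : G -> {vspace V}) : Prop :=
  [/\ assoc_bilinear,
      (\sum_(g : G) deg g)%VS = fullv,
      directv (\sum_(g : G) deg g)
    & forall (g h : G) a b, a \in deg g -> b \in deg h -> mul a b \in deg (g * h)%g].

Definition prodl (s : seq V) : V :=
  if s is x :: s' then foldl mul x s' else 0.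

Definition is_ideal (U : {vspace V}) : Prop :=
  forall a u, u \in U -> mul a u \in U /\ mul u a \in U.

Definition nilpotent_sp (U : {vspace V}) : Prop :=
  exists n : nat, forall s : seq V,
    size s = n.+1 -> all (fun x => x \in U) s -> prodl s = 0.

(* Jacobson radical of a finite dimensional algebra: the largest nilpotent *)
(* two-sided ideal.                                                        *)
Definition is_radical (U : {vspace V}) : Prop :=
  [/\ is_ideal U, nilpotent_sp U
    & forall I : {vspace V}, is_ideal I -> nilpotent_sp I -> (I <= U)%VS].

End Algebra.

(* Data of a graded Wedderburn-Malcev decomposition                       *)
(*   A = A_1 x ... x A_q (+) J_A                                          *)
(* with A_i = F^{alpha_i}[H_i] (x) M_{k_i}(F), presented through its      *)
(* standard basis  b i h r s = u_h (x) e_{r,s}  (h in H_i), of degree     *)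
(* (g_{i,r})^-1 h g_{i,s}, and a homogeneous basis bJ of J_A.             *)

Unset Implicit Arguments.
Record WMdata (F : fieldType) (G : finGroupType) (V : vectType F) := WMData {
  wm_q : nat;
  wm_H : 'I_wm_q -> {group G};
  wm_k : 'I_wm_q -> nat;
  wm_g : forall i, 'I_(wm_k i) -> G;
  wm_alpha : 'I_wm_q -> G -> G -> F;
  wm_b : forall i, G -> 'I_(wm_k i) -> 'I_(wm_k i) -> V;
  wm_m : nat;
  wm_bJ : 'I_wm_m -> V;
  wm_dJ : 'I_wm_m -> G }.
Arguments wm_q {F G V} _.
Arguments wm_H {F G V} _ _.
Arguments wm_k {F G V} _ _.
Arguments wm_g {F G V} _ _ _.
Arguments wm_alpha {F G V} _ _ _ _.
Arguments wm_b {F G V} _ _ _ _ _.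
Arguments wm_m {F G V} _.
Arguments wm_bJ {F G V} _ _.
Arguments wm_dJ {F G V} _ _.
Set Implicit Arguments.

Section WM.
Variables (F : fieldType) (G : finGroupType) (V : vectType F).
Variables (mul : V -> V -> V) (deg : G -> {vspace V}) (D : WMdata F G V).

Local Notation q := (wm_q D).
Local Notation H := (wm_H D).
Local Notation k := (wm_k D).
Local Notation b := (wm_b D).

Definition comp_basis (i : 'I_q) : seq V :=
  flatten [seq [seq b i h r s | r <- enum 'I_(k i), s <- enum 'I_(k i)]
          | h <- enum (H i)].

Definition J_basis : seq V := [seq wm_bJ D l | l <- enum 'I_(wm_m D)].

Definition WM_basis : seq V :=
  flatten [seq comp_basis i | i <- enum 'I_q] ++ J_basis.

Definition comp_sp (i : 'I_q) : {vspace V} := <<comp_basis i>>%VS.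
Definition J_sp : {vspace V} := <<J_basis>>%VS.

Definition graded_WM : Prop :=
  (forall i, (0 < k i)%N) /\
  (forall i h h', h \in H i -> h' \in H i -> wm_alpha D i h h' != 0) /\
  (forall i h r s, h \in H i ->
      b i h r s \in deg ((wm_g D i r)^-1 * h * wm_g D i s)%g) /\
  (* multiplication table of F^alpha[H_i] (x) M_k(F) *)
  (forall i h h' r s r' s', h \in H i -> h' \in H i ->
      mul (b i h r s) (b i h' r' s') =
      if s == r' then wm_alpha D i h h' *: b i (h * h')%g r s' else 0) /\
  (forall i j h h' r s r' s', i != j -> h \in H i -> h' \in H j ->
      mul (b i h r s) (b j h' r' s') = 0) /\
  (forall l, wm_bJ D l \in deg (wm_dJ D l)) /\
  basis_of fullv WM_basis /\
  is_radical mul J_sp.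

Definition chainprod (a z : 'I_q -> V) (s : seq 'I_q) : V :=
  if s is i0 :: s' then foldl (fun acc i => mul (mul acc (z i)) (a i)) (a i0) s'
  else 0.

Definition full : Prop :=
  exists (s : seq 'I_q) (a z : 'I_q -> V),
    [/\ perm_eq s (enum 'I_q), (forall i, a i \in comp_sp i),
        (forall i, z i \in J_sp) & chainprod a z s != 0].

Definition in_ss_basis (x : V) : Prop :=
  exists i h r s, h \in H i /\ x = b i h r s.

Definition in_basis (x : V) : Prop :=
  in_ss_basis x \/ exists l, x = wm_bJ D l.

End WM.

(* Variables are x_{n,g} = (n, g) : nat * G, of degree g.  A polynomial   *)
(* is represented by a formal finite sum of terms (coefficient, word);    *)
(* two representations denote the same polynomial iff they have the same  *)
(* coefficient function coefp.                                            *)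

Section FreeAlg.
Variables (F : fieldType) (G : finGroupType).

Definition gvar := (nat * G)%type.
Definition word := seq gvar.
Definition ncpoly := seq (F * word).

Definition coefp (p : ncpoly) (w : word) : F := \sum_(t <- p | t.2 == w) t.1.

Definition varsp (p : ncpoly) (x : gvar) : bool :=
  has (fun t => (coefp p t.2 != 0) && (x \in t.2)) p.

Definition multilinear (p : ncpoly) : Prop :=
  exists vs : seq gvar, [/\ (0 < size vs)%N, uniq vs &
    forall w, coefp p w != 0 -> perm_eq w vs].

Definition wdeg (w : word) : G := foldr (fun x acc => (x.2 * acc)%g) 1%g w.

Definition homogeneous (g : G) (p : ncpoly) : Prop :=
  forall w, coefp p w != 0 -> wdeg w = g.

Definition mulp (p r : ncpoly) : ncpoly :=
  [seq (u.1 * v.1, u.2 ++ v.2) | u <- p, v <- r].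

Definition graded_subst (phi : gvar -> ncpoly) : Prop :=
  forall x, homogeneous x.2 (phi x) /\ coefp (phi x) [::] = 0.

Definition substw (phi : gvar -> ncpoly) (w : word) : ncpoly :=
  foldr (fun x acc => mulp (phi x) acc) [:: (1, [::])] w.

Definition substp (phi : gvar -> ncpoly) (p : ncpoly) : ncpoly :=
  flatten [seq [seq (t.1 * u.1, u.2) | u <- substw phi t.2] | t <- p].

Definition sandwich (c : F) (a bw : word) (r : ncpoly) : ncpoly :=
  [seq (c * u.1, a ++ u.2 ++ bw) | u <- r].

Definition in_Tideal (f0 f : ncpoly) : Prop :=
  exists (n : nat) (c : 'I_n -> F) (a bw : 'I_n -> word) (phi : 'I_n -> gvar -> ncpoly),
    (forall j, graded_subst (phi j)) /\
    forall w, coefp f w =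
      coefp (flatten [seq sandwich (c j) (a j) (bw j) (substp (phi j) f0)
                     | j <- enum 'I_n]) w.

End FreeAlg.

Section Full.
Variables (F : fieldType) (G : finGroupType) (V : vectType F).
Variables (mul : V -> V -> V) (deg : G -> {vspace V}) (D : WMdata F G V).

Definition evalp (v : gvar G -> V) (p : ncpoly F G) : V :=
  \sum_(t <- p) t.1 *: prodl mul (map v t.2).

Definition admissible (p : ncpoly F G) (v : gvar G -> V) : Prop :=
  forall x, varsp p x -> in_basis D (v x) /\ v x \in deg x.2.

Definition graded_eval (v : gvar G -> V) : Prop := forall x, v x \in deg x.2.

Definition nonidentity (p : ncpoly F G) : Prop :=
  exists v, graded_eval v /\ evalp v p != 0.

Definition weakly_full (p : ncpoly F G) : Prop :=
  exists v, [/\ admissible p v, evalp v p != 0 &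
    forall i : 'I_(wm_q D), exists x, varsp p x /\
      exists h r s, h \in wm_H D i /\ v x = wm_b D i h r s].

Definition strongly_full (p : ncpoly F G) : Prop :=
  nonidentity p /\
  forall v, admissible p v -> evalp v p != 0 ->
    forall (i : 'I_(wm_q D)) h r s, h \in wm_H D i ->
      exists x, varsp p x /\ v x = wm_b D i h r s.

End Full.

(* Let [J] be the radical, with [J^(nJ+1) = 0], and [u_h e_{r,s}] the standard
   basis of the simple components [A_i].  Fix a nonzero admissible evaluation of
   [f0] in which, for every [i], a variable [x_i] takes a value [u_h e_{r_i,s}]
   in [A_i].  For each of [nJ+1] copies and each basis element [u_h e_{r,s}] of
   [A_i], take three fresh variables of the degrees of [e_{r_i,r}], [u_h e_{r,s}]
   and [u_h^-1 e_{s,r_i}]; substitute for [x_i] the product of all these triples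
   of component [i] followed by [x_i], and alternate over the permutations of the
   middle variables that preserve the copy and the degree.  Evaluating the fresh variables at
   their designed values, only the identity permutation survives, so [f] is not
   an identity.  In a nonzero admissible evaluation some copy has all its middle
   variables in the semisimple part, as otherwise each monomial has [nJ+1]
   factors in [J]; by alternation in characteristic 0 these take distinct
   values, hence all basis elements of the semisimple part. *)

From Pilot Require Import Defs.
From HB Require Import structures.
From mathcomp Require Import all_boot all_order all_fingroup all_algebra zify.
Set Implicit Arguments. Unset Strict Implicit. Unset Printing Implicit Defensive.
Import GRing.Theory.
Local Open Scope ring_scope.
Local Notation coefp := Defs.coefp.

Lemma linear_morph_0DZ (F : fieldType) (U W : lmodType F) (f : U -> W) :
  linear f -> [/\ f 0 = 0, {morph f : u v / u + v} & forall c, {morph f : u / c *: u}].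
Proof.
move=> f_lin; have f0 : f 0 = 0.
  by apply: (@addrI _ (f 0)); have := f_lin 1 0 0; rewrite !scale1r !addr0.
split=> // [u v|c u]; first by have := f_lin 1 u v; rewrite !scale1r.
by have := f_lin c u 0; rewrite !addr0 f0 addr0.
Qed.

Section AssocProducts.
Variables (F : fieldType) (V : vectType F) (mul : V -> V -> V).
Hypothesis mul_assoc_bilinear : assoc_bilinear mul.

Lemma mulv0 a : mul a 0 = 0.
Proof. by case: mul_assoc_bilinear => mulL _ _; case: (linear_morph_0DZ (mulL a)) => ->. Qed.
Lemma mul0v a : mul 0 a = 0.
Proof. by case: mul_assoc_bilinear => _ mulR _; case: (linear_morph_0DZ (mulR a)) => ->. Qed.
Lemma mulvZ a c u : mul a (c *: u) = c *: mul a u.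
Proof.
by case: mul_assoc_bilinear => mulL _ _; case: (linear_morph_0DZ (mulL a)) => _ _ ->.
Qed.
Lemma mulZv a c u : mul (c *: u) a = c *: mul u a.
Proof.
by case: mul_assoc_bilinear => _ mulR _; case: (linear_morph_0DZ (mulR a)) => _ _ ->.
Qed.
Lemma mulvA a b c : mul a (mul b c) = mul (mul a b) c.
Proof. by case: mul_assoc_bilinear. Qed.

Local Notation prodl := (prodl mul).

Lemma foldl_mulA x y s : foldl mul (mul x y) s = mul x (foldl mul y s).
Proof. by elim: s y => //= z s IHs y; rewrite -mulvA IHs. Qed.

Lemma prodl_cat s1 s2 : s1 != [::] -> s2 != [::] ->
  prodl (s1 ++ s2) = mul (prodl s1) (prodl s2).
Proof.
by case: s1 => // a s1 _; case: s2 => // b s2 _ /=; rewrite foldl_cat /= foldl_mulA.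
Qed.

Lemma prodl_cons a s : s != [::] -> prodl (a :: s) = mul a (prodl s).
Proof. by move=> s_nil; rewrite -cat1s prodl_cat. Qed.

Lemma prodl_rcons s x : s != [::] -> prodl (rcons s x) = mul (prodl s) x.
Proof. by case: s => // a s _; rewrite /= foldl_rcons. Qed.

Lemma prodl_rcons_mul s y x : prodl (rcons s (mul y x)) = mul (prodl (rcons s y)) x.
Proof. by case: s => [|a s] //; rewrite !prodl_rcons // mulvA. Qed.

Lemma prodl_flatten (ss : seq (seq V)) : all (fun s => s != [::]) ss ->
  prodl (flatten ss) = prodl (map prodl ss).
Proof.
elim: ss => // s [|s' ss] IHss /= /andP[s_nil ss_nil]; first by rewrite cats0.
rewrite prodl_cat //; last by case: s' ss_nil {IHss}.
by rewrite IHss //= foldl_mulA.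
Qed.

Lemma prodl_eq0 s : 0 \in s -> prodl s = 0.
Proof.
elim: s => // a s IHs; rewrite inE => /orP[/eqP<-|s0].
  by case: s {IHs} => //= b s; rewrite mul0v; elim: s => //= c s; rewrite mul0v.
by rewrite -cat1s prodl_cat ?IHs ?mulv0 //; case: s s0 {IHs}.
Qed.

Lemma prodl_scale (T : Type) (c : T -> F) (w : T -> V) (s : seq T) :
  prodl [seq c x *: w x | x <- s] = (\prod_(x <- s) c x) *: prodl (map w s).
Proof.
case: s => [|a s] /=; first by rewrite scaler0.
rewrite big_cons; elim: s (w a) (c a) => /= [|x s IHs] u k; first by rewrite big_nil mulr1.
by rewrite mulZv mulvZ scalerA IHs big_cons mulrA [k * _]mulrC.
Qed.

Section Ideal.
Variable U : {vspace V}.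
Hypothesis U_ideal : is_ideal mul U.
Local Notation inU := (fun x => x \in U).

(* Each element of [U] absorbs its non-[U] right neighbours. *)
Lemma prodl_ideal_compress s : (0 < count inU s)%N ->
  exists t, [/\ size t = count inU s, all inU t & prodl s = prodl t].
Proof.
elim/last_ind: s => // s x IHs; rewrite -cats1 count_cat /= addn0.
have prod_sx : s != [::] -> prodl (s ++ [:: x]) = mul (prodl s) x.
  by move=> s_nil; rewrite cats1 prodl_rcons.
case xU: (x \in U) => /= count_gt0.
  have [cs0|cs_gt0] := posnP (count inU s).
    exists [:: prodl (s ++ [:: x])]; rewrite cs0 /= andbT; split=> //.
    case: s cs0 {IHs prod_sx count_gt0} => [|y s] _ /=; first by rewrite xU.
    by rewrite foldl_cat /=; have [] := U_ideal (foldl mul y s) xU.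
  have s_nil : s != [::] by apply: contraTneq cs_gt0 => ->.
  have [t [size_t Ut prod_t]] := IHs cs_gt0.
  have t_nil : t != [::] by rewrite -size_eq0 size_t -lt0n.
  exists (rcons t x); rewrite size_rcons size_t addn1 all_rcons xU Ut.
  by rewrite prod_sx // prod_t prodl_rcons.
rewrite addn0 in count_gt0 *.
have s_nil : s != [::] by apply: contraTneq count_gt0 => ->.
rewrite prod_sx //; have [t [size_t Ut ->]] := IHs count_gt0.
case/lastP: t size_t Ut => [|t y] size_t; first by rewrite -size_t in count_gt0.
rewrite all_rcons => /andP[yU Ut]; exists (rcons t (mul y x)).
rewrite size_rcons -size_t size_rcons all_rcons Ut andbT -prodl_rcons_mul.
by split=> //; have [] := U_ideal x yU.
Qed.

Lemma prodl_nilpotent_count n :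
  (forall s, size s = n.+1 -> all inU s -> prodl s = 0) ->
  forall s, (n < count inU s)%N -> prodl s = 0.
Proof.
move=> U_nil s count_gt.
have [t [size_t Ut ->]] := prodl_ideal_compress (leq_ltn_trans (leq0n n) count_gt).
rewrite -size_t in count_gt; rewrite -(cat_take_drop n.+1 t).
have size_take_t : size (take n.+1 t) = n.+1 by rewrite size_takel.
have U_nil_take : prodl (take n.+1 t) = 0.
  by apply: U_nil => //; apply/allP => y /mem_take /(allP Ut).
case: (drop n.+1 t) => [|y d]; first by rewrite cats0.
by rewrite prodl_cat -?size_eq0 ?size_take_t // U_nil_take mul0v.
Qed.

End Ideal.
End AssocProducts.

Lemma directv_mem_eq (F : fieldType) (V : vectType F) (I : finType)
    (U : I -> {vspace V}) x i j :
  directv (\sum_i U i) -> x != 0 -> x \in U i -> x \in U j -> i = j.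
Proof.
move=> dxU x_neq0 xUi xUj; apply/eqP; apply: contraNT x_neq0 => neq_ij.
pose us l := if l == i then x else if l == j then - x else 0.
have us_sum : \sum_l us l = 0.
  rewrite (bigD1 i) //= (bigD1 j) 1?eq_sym //= /us eqxx eq_sym (negbTE neq_ij) eqxx.
  by rewrite addrA subrr add0r big1 // => l /andP[/negbTE-> /negbTE->].
have us_mem l : true -> us l \in U l.
  by move=> _; rewrite /us; case: eqP => [->//|_]; case: eqP => [->|_]; rewrite ?memvN ?mem0v.
by have := (directv_sum_independent dxU) us us_mem us_sum i isT; rewrite /us eqxx => ->.
Qed.

Lemma sum_sign_perm_eq0 (F : fieldType) (W : lmodType F) (T : finType)
    (P : {set {perm T}}) (E : {perm T} -> W) (x y : T) :
  [pchar F] =i pred0 -> x != y ->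
  (forall s, (s * tperm x y \in P)%g = (s \in P)) ->
  (forall s, E (s * tperm x y)%g = E s) ->
  \sum_(s in P) (-1) ^+ odd_perm s *: E s = 0.
Proof.
move=> charF0 neq_xy P_tperm E_tperm; set S := \sum_(s in P) _.
have S_opp : S = - S.
  rewrite {1}/S (reindex_inj (mulIg (tperm x y))) /= -sumrN.
  apply: eq_big => [s|s _]; first exact: P_tperm.
  rewrite E_tperm odd_permM odd_tperm neq_xy.
  by case: (odd_perm s); rewrite /= ?expr1 ?expr0 ?scaleN1r ?scale1r ?opprK.
have : 2%:R *: S = 0 by rewrite mulr2n scalerDl scale1r {1}S_opp addNr.
by move/eqP; rewrite scaler_eq0 ((pcharf0P _).1 charF0 2) => /eqP.
Qed.

Section NcPoly.
Variables (F : fieldType) (G : finGroupType).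
Implicit Types (p : ncpoly F G) (w : word G).

Lemma big_ncpoly_coefp (W : lmodType F) (K : word G -> W) p :
  \sum_(t <- p) t.1 *: K t.2 = \sum_(u <- undup (map snd p)) coefp p u *: K u.
Proof.
transitivity (\sum_(u <- undup (map snd p)) \sum_(t <- p)
                (if t.2 == u then t.1 *: K t.2 else 0)).
  rewrite exchange_big /=; apply: eq_big_seq => t tp.
  rewrite (bigD1_seq t.2) ?undup_uniq ?mem_undup ?map_f //= eqxx big1 ?addr0 //.
  by move=> u /negbTE; rewrite eq_sym => ->.
apply: eq_bigr => u _; rewrite /coefp scaler_suml [RHS]big_mkcond /=.
by apply: eq_bigr => t _; case: eqP => // ->.
Qed.

Lemma evalp_coefp (V : vectType F) (mul : V -> V -> V) v p :
  evalp mul v p = \sum_(u <- undup (map snd p)) coefp p u *: prodl mul (map v u).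
Proof. exact: big_ncpoly_coefp. Qed.

Lemma evalp_neq0_coefp (V : vectType F) (mul : V -> V -> V) v p :
  evalp mul v p != 0 -> exists2 t, t \in p & coefp p t.2 != 0.
Proof.
rewrite evalp_coefp => /eqP sum_neq0.
have /hasP[u] : has (fun u => coefp p u != 0) (undup (map snd p)).
  apply: contraFT (introF eqP sum_neq0) => /hasPn coef0; apply/eqP.
  by rewrite big1_seq // => u /andP[_ /coef0 /negPn /eqP ->]; rewrite scale0r.
by rewrite mem_undup => /mapP[t tp ->]; exists t.
Qed.

Lemma varsp_multilinear p vs t x :
  (forall w, coefp p w != 0 -> perm_eq w vs) -> t \in p -> coefp p t.2 != 0 ->
  varsp p x = (x \in vs).
Proof.
move=> p_vs tp ct; apply/hasP/idP => [[u _ /andP[cu xu]]|xvs].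
  by rewrite -(perm_mem (p_vs _ cu)).
by exists t; rewrite // ct (perm_mem (p_vs _ ct)).
Qed.

Lemma wdeg_cat w1 w2 : wdeg (w1 ++ w2) = (wdeg w1 * wdeg w2)%g.
Proof. by elim: w1 => /= [|x w ->]; rewrite ?mul1g ?mulgA. Qed.

Lemma wdeg_flatten_eq1 (ws : seq (word G)) :
  (forall w, w \in ws -> wdeg w = 1%g) -> wdeg (flatten ws) = 1%g.
Proof.
elim: ws => //= w ws IHws ws1; rewrite wdeg_cat ws1 ?mem_head // IHws ?mul1g //.
by move=> w' w'ws; apply: ws1; rewrite inE w'ws orbT.
Qed.

End NcPoly.

Section WMBasis.
Variables (F : fieldType) (G : finGroupType) (V : vectType F).
Variables (mul : V -> V -> V) (deg : G -> {vspace V}) (D : WMdata F G V).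

Local Notation q := (wm_q D).
Local Notation H := (wm_H D).
Local Notation k := (wm_k D).
Local Notation b := (wm_b D).
Local Notation gg := (wm_g D).
Local Notation al := (wm_alpha D).

Hypothesis A_graded : graded_algebra mul deg.
Hypothesis A_WM : graded_WM mul deg D.

Let mul_assoc_bilinear : assoc_bilinear mul.
Proof. by case: A_graded. Qed.
Let deg_direct : directv (\sum_(g : G) deg g).
Proof. by case: A_graded. Qed.
Let alpha_neq0 i h h' : h \in H i -> h' \in H i -> al i h h' != 0.
Proof. by case: A_WM => _ [/(_ i h h')]. Qed.
Let b_deg i h r s : h \in H i -> b i h r s \in deg ((gg i r)^-1 * h * gg i s)%g.
Proof. by case: A_WM => _ [_ [/(_ i h r s)]]. Qed.
Let mulb i h h' r s r' s' : h \in H i -> h' \in H i ->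
  mul (b i h r s) (b i h' r' s') = if s == r' then al i h h' *: b i (h * h')%g r s' else 0.
Proof. by case: A_WM => _ [_ [_ [/(_ i h h' r s r' s')]]]. Qed.
Let mulb_orth i j h h' r s r' s' : i != j -> h \in H i -> h' \in H j ->
  mul (b i h r s) (b j h' r' s') = 0.
Proof. by case: A_WM => _ [_ [_ [_ [/(_ i j h h' r s r' s')]]]]. Qed.
Let WM_basis_basis : basis_of fullv (WM_basis D).
Proof. by case: A_WM => _ [_ [_ [_ [_ [_ []]]]]]. Qed.
Let J_ideal : is_ideal mul (J_sp D).
Proof. by case: A_WM => _ [_ [_ [_ [_ [_ [_ []]]]]]]. Qed.

Lemma bJ_in_J l : wm_bJ D l \in J_sp D.
Proof. by apply: memv_span; apply: map_f; rewrite mem_enum. Qed.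

Lemma b_neq0 i h r s : h \in H i -> b i h r s != 0.
Proof.
move=> hH; apply: (free_not0 (basis_free WM_basis_basis)).
rewrite mem_cat; apply/orP; left; apply/flatten_mapP; exists i; rewrite ?mem_enum //.
apply/flatten_mapP; exists h; rewrite ?mem_enum //.
by apply/allpairsP; exists (r, s); rewrite !mem_enum.
Qed.

Lemma b_comp_inj i j h h' (r s : 'I_(k i)) (r' s' : 'I_(k j)) :
  h \in H i -> h' \in H j -> b i h r s = b j h' r' s' -> i = j.
Proof.
move=> hH h'H eq_b; apply/eqP; apply: contraT => neq_ij.
have H1 := group1 (H i).
have := mulb_orth r r r' s' neq_ij H1 h'H; rewrite -eq_b mulb // eqxx mul1g.
by move/eqP; rewrite scaler_eq0 (negbTE (alpha_neq0 H1 hH)) (negbTE (b_neq0 r s hH)).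
Qed.

Lemma prodl_b_idem i h (r s : 'I_(k i)) (cs : seq F) : h \in H i ->
  prodl mul ([seq c *: b i 1 r r | c <- cs] ++ [:: b i h r s]) =
  ((\prod_(c <- cs) c) * al i 1 h ^+ size cs) *: b i h r s.
Proof.
move=> hH; elim: cs => [|c cs IHcs]; first by rewrite big_nil expr0 mul1r scale1r.
rewrite map_cons cat_cons prodl_cons ?IHcs //; last by case: (map _ _).
change (size (c :: cs)) with (size cs).+1.
by rewrite mulZv // mulvZ // mulb ?group1 // eqxx mul1g !scalerA big_cons exprSr -!mulrA.
Qed.

(* Indices [(i, h, r, s)], [h \in H i], of the basis [u_h e_{r,s}] of [A_ss]. *)
Definition ss_index := {i : 'I_q & (G * 'I_(k i) * 'I_(k i))%type}.
Definition ss_elt := {t : ss_index | (tagged t).1.1 \in H (tag t)}.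

Definition ss_comp (p : ss_elt) : 'I_q := tag (val p).
Definition ss_h (p : ss_elt) : G := (tagged (val p)).1.1.
Definition ss_r (p : ss_elt) : 'I_(k (ss_comp p)) := (tagged (val p)).1.2.
Definition ss_s (p : ss_elt) : 'I_(k (ss_comp p)) := (tagged (val p)).2.
Definition ss_b (p : ss_elt) : V := b (ss_comp p) (ss_h p) (ss_r p) (ss_s p).
Definition ss_deg (p : ss_elt) : G :=
  ((gg _ (ss_r p))^-1 * ss_h p * gg _ (ss_s p))%g.
Definition ss_mk i h (r s : 'I_(k i)) (hH : h \in H i) : ss_elt :=
  exist _ (existT _ i (h, r, s)) hH.

Lemma ss_hP p : ss_h p \in H (ss_comp p).
Proof. exact: valP p. Qed.

Lemma ss_b_deg p : ss_b p \in deg (ss_deg p).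
Proof. exact/b_deg/ss_hP. Qed.

Lemma ss_b_neq0 p : ss_b p != 0.
Proof. exact/b_neq0/ss_hP. Qed.

Lemma in_ss_basisP x : reflect (in_ss_basis D x) [exists p, x == ss_b p].
Proof.
apply: (iffP exists_eqP) => [[p ->]|[i [h [r [s [hH ->]]]]]].
  by exists (ss_comp p), (ss_h p), (ss_r p), (ss_s p); rewrite ss_hP.
by exists (ss_mk r s hH).
Qed.

Lemma ss_triple_id p (rr : 'I_(k (ss_comp p))) :
  mul (mul (b (ss_comp p) 1 rr (ss_r p)) (ss_b p)) (b (ss_comp p) (ss_h p)^-1 (ss_s p) rr) =
  (al (ss_comp p) 1 (ss_h p) * al (ss_comp p) (ss_h p) (ss_h p)^-1) *: b (ss_comp p) 1 rr rr.
Proof.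
have hH := ss_hP p; rewrite /ss_b mulb ?group1 // eqxx mul1g.
by rewrite mulZv // mulb ?groupV // eqxx mulgV scalerA.
Qed.

Lemma ss_triple_eq0 p p' (rr : 'I_(k (ss_comp p))) :
  p' != p -> ss_deg p' = ss_deg p ->
  mul (mul (b (ss_comp p) 1 rr (ss_r p)) (ss_b p'))
      (b (ss_comp p) (ss_h p)^-1 (ss_s p) rr) = 0.
Proof.
case: p rr => [[i [[h r] s]] /= hH] rr; case: p' => [[i' [[h' r'] s']] /= h'H].
rewrite /ss_b /ss_deg /ss_comp /ss_h /ss_r /ss_s /= => neq_p eq_deg.
have [eq_i|neq_i] := eqVneq i' i; last by rewrite mulb_orth 1?eq_sym ?group1 // mul0v.
subst i'; rewrite mulb ?group1 //; have [eq_r|_] := eqVneq r r'; last by rewrite mul0v.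
subst r'; rewrite mul1g mulZv // mulb ?groupV //; have [eq_s|_] := eqVneq s' s; last first.
  by rewrite scaler0.
subst s'; move/mulIg/mulgI: eq_deg => eq_h; subst h'.
by move: neq_p; rewrite (bool_irrelevance h'H hH) eqxx.
Qed.

Section Construction.
Hypothesis charF0 : [pchar F] =i pred0.
Variable nJ : nat.
Hypothesis J_nil : forall s, size s = nJ.+1 ->
  all (fun x => x \in J_sp D) s -> prodl mul s = 0.
Variable f0 : ncpoly F G.
Variable vs0 : seq (gvar G).
Hypotheses (vs0_gt0 : (0 < size vs0)%N) (vs0_uniq : uniq vs0).
Hypothesis f0_vs0 : forall w, coefp f0 w != 0 -> perm_eq w vs0.
Variable v0 : gvar G -> V.
Hypotheses (v0_admissible : admissible deg D f0 v0) (v0_f0_neq0 : evalp mul v0 f0 != 0).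
Variables (xv : 'I_q -> gvar G) (hx : 'I_q -> G) (rx sx : forall i, 'I_(k i)).
Hypothesis xv_f0 : forall i, varsp f0 (xv i).
Hypothesis hx_in : forall i, hx i \in H i.
Hypothesis v0_xv : forall i, v0 (xv i) = b i (hx i) (rx i) (sx i).

Definition fresh0 : nat := (\max_(t <- f0) \max_(x <- t.2) x.1).+1.

Lemma f0_var_lt t x : t \in f0 -> x \in t.2 -> (x.1 < fresh0)%N.
Proof.
by move=> tf0 xt; rewrite ltnS (leq_trans (leq_bigmax_seq _ _ _) (leq_bigmax_seq _ tf0 _)).
Qed.

Lemma f0_word : exists2 t, t \in f0 & coefp f0 t.2 != 0.
Proof. exact: evalp_neq0_coefp v0_f0_neq0. Qed.

Lemma varsp_f0 x : varsp f0 x = (x \in vs0).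
Proof. by have [t tf0 ct] := f0_word; apply: varsp_multilinear ct. Qed.

Lemma vs0_lt_fresh0 x : x \in vs0 -> (x.1 < fresh0)%N.
Proof.
by have [t tf0 ct] := f0_word; rewrite -(perm_mem (f0_vs0 ct)); apply: f0_var_lt.
Qed.

Lemma xv_vs0 i : xv i \in vs0.
Proof. by rewrite -varsp_f0 xv_f0. Qed.

Lemma xv_inj : injective xv.
Proof.
move=> i j eq_x; apply: (b_comp_inj (hx_in i) (hx_in j) (r := rx i) (s := sx i)).
by rewrite -!v0_xv eq_x.
Qed.

Lemma pick_xv i : [pick j | xv j == xv i] = Some i.
Proof. by case: pickP => [j /eqP /xv_inj -> //|/(_ i)]; rewrite eqxx. Qed.

(* Slot [(c, p)]: copy [c] of the basis element [p = u_h e_{r,s}] of [A_i].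
   Its variables [svar (c, p) j], [j = 0, 1, 2], have the degrees of
   [e_{rx i, r}], [u_h e_{r,s}], [u_h^-1 e_{s, rx i}]. *)
Local Notation slot := ('I_nJ.+1 * ss_elt)%type.

Definition slot_deg (p : ss_elt) (j : nat) : G :=
  let i := ss_comp p in
  match j with
  | 0 => (gg i (rx i))^-1 * gg i (ss_r p)
  | 1 => ss_deg p
  | _ => (gg i (ss_s p))^-1 * (ss_h p)^-1 * gg i (rx i)
  end%g.

Definition slot_val (p : ss_elt) (j : nat) : V :=
  let i := ss_comp p in
  match j with
  | 0 => b i 1 (rx i) (ss_r p)
  | 1 => ss_b p
  | _ => b i (ss_h p)^-1 (ss_s p) (rx i)
  end.

Lemma slot_val_deg p j : (j < 3)%N -> slot_val p j \in deg (slot_deg p j).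
Proof.
have hH := ss_hP p; case: j => [|[|[|//]]] _ /=; last by apply: b_deg; rewrite groupV.
  by have := b_deg (rx (ss_comp p)) (ss_r p) (group1 (H (ss_comp p))); rewrite mulg1.
exact: ss_b_deg.
Qed.

Definition svar (z : slot) (j : nat) : gvar G :=
  ((fresh0 + 3 * enum_rank z + j)%N, slot_deg z.2 j).

Lemma svar_fresh z j : (fresh0 <= (svar z j).1)%N.
Proof. by rewrite /= -addnA leq_addr. Qed.

Lemma svar_inj z z' j j' : (j < 3)%N -> (j' < 3)%N ->
  svar z j = svar z' j' -> z = z' /\ j = j'.
Proof.
move=> j_lt j'_lt [] eq_n _.
have [eq_z ->] : (enum_rank z : nat) = enum_rank z' /\ j = j'.
  by move: eq_n j_lt j'_lt; move: (nat_of_ord _) (nat_of_ord _) => n n'; lia.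
by split=> //; apply/enum_rank_inj/val_inj.
Qed.

Definition triple (s : {perm slot}) (z : slot) : word G :=
  [:: svar z 0; svar (s z) 1; svar z 2].

Definition comp_slots (i : 'I_q) : seq slot := [seq z <- enum {: slot} | ss_comp z.2 == i].

Definition comp_word (s : {perm slot}) (i : 'I_q) : word G :=
  flatten (map (triple s) (comp_slots i)).

Definition phi_var (s : {perm slot}) (x : gvar G) : word G :=
  if [pick i | xv i == x] is Some i then comp_word s i ++ [:: x] else [:: x].

Definition phi_word (s : {perm slot}) (w : word G) : word G := flatten (map (phi_var s) w).

Definition phi (s : {perm slot}) (x : gvar G) : ncpoly F G := [:: (1, phi_var s x)].

Definition Sslot : {set {perm slot}} :=
  [set s : {perm slot} | [forall z, ((s z).1 == z.1) && (ss_deg (s z).2 == ss_deg z.2)]].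

Lemma SslotP (s : {perm slot}) :
  reflect (forall z, (s z).1 = z.1 /\ ss_deg (s z).2 = ss_deg z.2) (s \in Sslot).
Proof.
rewrite inE; apply: (iffP forallP) => [Ss z|Ss z]; last by rewrite !(Ss z).2 (Ss z).1 !eqxx.
by have /andP[/eqP-> /eqP->] := Ss z.
Qed.

Lemma group_set_Sslot : group_set Sslot.
Proof.
apply/group_setP; split; first by apply/SslotP => z; rewrite perm1.
move=> s t /SslotP Ss /SslotP St; apply/SslotP => z.
by rewrite permM (St (s z)).1 (St (s z)).2 (Ss z).1 (Ss z).2.
Qed.

Canonical Sslot_group := group group_set_Sslot.

Lemma tperm_Sslot c p p' : ss_deg p = ss_deg p' -> tperm (c, p) (c, p') \in Sslot.
Proof. by move=> eq_deg; apply/SslotP => z; case: tpermP => [->|->|] //=; rewrite eq_deg. Qed.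

Definition sgn (s : {perm slot}) : F := (-1) ^+ odd_perm s.

Definition f_strong : ncpoly F G :=
  flatten [seq sandwich (sgn (enum_val j)) [::] [::] (substp (phi (enum_val j)) f0)
          | j <- enum 'I_#|Sslot|].

Definition phi_eval (v : gvar G -> V) (s : {perm slot}) : V :=
  \sum_(t <- f0) t.1 *: prodl mul (map v (phi_word s t.2)).

Lemma substp_phi s (p : ncpoly F G) :
  substp (phi s) p = [seq (t.1 * 1, phi_word s t.2) | t <- p].
Proof.
have substw_phi w : substw (phi s) w = [:: (1, phi_word s w)].
  by elim: w => //= x w ->; rewrite /mulp /= mulr1.
by elim: p => //= t p IHp; rewrite /substp /= substw_phi /= -IHp.
Qed.

Lemma evalp_f_strong v : evalp mul v f_strong = \sum_(s in Sslot) sgn s *: phi_eval v s.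
Proof.
rewrite /evalp /f_strong big_flatten /= big_map [RHS]big_enum_val /= big_enum /=.
apply: eq_bigr => j _; rewrite /sandwich substp_phi -map_comp big_map scaler_sumr.
by apply: eq_bigr => t _ /=; rewrite cats0 mulr1 scalerA.
Qed.

Lemma coefp_f_strong w :
  coefp f_strong w = \sum_(s in Sslot) sgn s * \sum_(t <- f0 | phi_word s t.2 == w) t.1.
Proof.
rewrite /coefp /f_strong big_flatten /= big_map [RHS]big_enum_val /= big_enum /=.
apply: eq_bigr => j _; rewrite /sandwich substp_phi -map_comp big_map big_distrr /=.
rewrite big_mkcond [RHS]big_mkcond; apply: eq_bigr => t _ /=.
by rewrite cats0 mulr1; case: eqP.
Qed.

Lemma comp_word_fresh s i x : x \in comp_word s i -> (fresh0 <= x.1)%N.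
Proof. by move=> /flatten_mapP[z _]; rewrite !inE => /or3P[] /eqP->; apply: svar_fresh. Qed.

Lemma filter_phi_word s w : all (fun x => x.1 < fresh0)%N w ->
  filter (fun x => x.1 < fresh0)%N (phi_word s w) = w.
Proof.
elim: w => //= x w IHw /andP[x_lt w_lt]; rewrite /phi_word /= -/(phi_word s w).
rewrite filter_cat IHw // /phi_var; case: pickP => [i _|_]; rewrite /= ?x_lt //.
rewrite filter_cat /= x_lt; suff -> : [seq y <- comp_word s i | (y.1 < fresh0)%N] = [::] by [].
apply/eqP; rewrite -[_ == _]negbK -has_filter; apply/hasPn => y /comp_word_fresh.
by rewrite -leqNgt.
Qed.

Lemma phi_word_f0_inj s t1 t2 : t1 \in f0 -> t2 \in f0 ->
  phi_word s t1.2 = phi_word s t2.2 -> t1.2 = t2.2.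
Proof.
have f0_lt t : t \in f0 -> all (fun x => x.1 < fresh0)%N t.2.
  by move=> tf0; apply/allP => x; apply: f0_var_lt.
move=> t1f0 t2f0 eq_w.
by rewrite -(filter_phi_word s (f0_lt _ t1f0)) eq_w filter_phi_word ?f0_lt.
Qed.

Definition slot_vars : seq (gvar G) := [seq svar z j | z <- enum {: slot}, j <- iota 0 3].
Definition f_vars : seq (gvar G) := vs0 ++ slot_vars.

Lemma count_phi_var s (a : pred (gvar G)) x :
  count a (phi_var s x) = (a x + \sum_(i | xv i == x) count a (comp_word s i))%N.
Proof.
rewrite /phi_var; case: pickP => [i /eqP xi|no_i]; last by rewrite big_pred0 //= addn0.
rewrite count_cat /= addn0 addnC (big_pred1 i) // => j; rewrite -xi.
by apply/eqP/eqP => [/xv_inj|->].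
Qed.

Lemma count_phi_word s (a : pred (gvar G)) u : perm_eq u vs0 ->
  count a (phi_word s u) = (count a vs0 + \sum_i count a (comp_word s i))%N.
Proof.
move=> u_vs0; rewrite /phi_word count_flatten sumnE !big_map (perm_big _ u_vs0).
under eq_bigr do rewrite count_phi_var.
rewrite big_split /=; congr (_ + _)%N; first by rewrite -sumn_count sumnE big_map.
rewrite (exchange_big_dep predT) //=; apply: eq_bigr => i _.
rewrite -big_filter (@eq_filter _ _ (pred1 (xv i))) => [|x]; last by rewrite /= eq_sym.
by rewrite filter_pred1_uniq ?xv_vs0 // big_seq1.
Qed.

Lemma sum_count_comp_word s (a : pred (gvar G)) :
  (\sum_i count a (comp_word s i))%N =
  (\sum_z (a (svar z 0) + a (svar z 1) + a (svar z 2)))%N.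
Proof.
transitivity (\sum_z count a (triple s z))%N.
  rewrite [RHS](partition_big (fun z : slot => ss_comp z.2) predT) //=.
  apply: eq_bigr => i _; rewrite /comp_word count_flatten sumnE !big_map.
  by rewrite big_filter big_enum_cond.
rewrite /triple; under eq_bigr => z _ do rewrite /= addn0 addnA.
rewrite !big_split /=; congr (_ + _ + _)%N.
by rewrite [RHS](reindex_inj (@perm_inj _ s)).
Qed.

Lemma count_slot_vars (a : pred (gvar G)) :
  count a slot_vars = (\sum_z (a (svar z 0) + a (svar z 1) + a (svar z 2)))%N.
Proof.
rewrite count_flatten sumnE !big_map -enumT big_enum /=.
by apply: eq_bigr => z _; rewrite /= addn0 addnA.
Qed.

Lemma perm_phi_word s u : perm_eq u vs0 -> perm_eq (phi_word s u) f_vars.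
Proof.
move=> u_vs0; apply/seq.permP => a.
by rewrite count_phi_word // sum_count_comp_word count_cat count_slot_vars.
Qed.

Lemma slot_vars_fresh x : x \in slot_vars -> (fresh0 <= x.1)%N.
Proof. by move=> /allpairsP[[z j] [_ _ ->]]; apply: svar_fresh. Qed.

Lemma f_vars_uniq : uniq f_vars.
Proof.
rewrite cat_uniq vs0_uniq /=; apply/andP; split.
  apply/hasPn => x /slot_vars_fresh; apply: contraL => /vs0_lt_fresh0.
  by rewrite -leqNgt.
apply: allpairs_uniq; rewrite ?enum_uniq ?iota_uniq //.
move=> [z j] [z' j'] /allpairsP[[? ?] [_ j_lt [-> ->]]] /allpairsP[[? ?] [_ j'_lt [-> ->]]].
move: j_lt j'_lt; rewrite !mem_iota /= => j_lt j'_lt /(svar_inj j_lt j'_lt).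
by case=> -> ->.
Qed.

Lemma svar_f_vars z j : (j < 3)%N -> svar z j \in f_vars.
Proof.
move=> j_lt; rewrite mem_cat; apply/orP; right.
by apply/allpairsP; exists (z, j); rewrite mem_enum mem_iota.
Qed.

Lemma coefp_f_strong_neq0 w : coefp f_strong w != 0 -> perm_eq w f_vars.
Proof.
rewrite coefp_f_strong => /eqP coef_neq0.
have /exists_inP[s sS /eqP sum_neq0] :
    [exists s in Sslot, \sum_(t <- f0 | phi_word s t.2 == w) t.1 != 0].
  apply: contraT => /exists_inPn sum0; case: coef_neq0.
  by apply: big1 => s /sum0 /negPn /eqP ->; rewrite mulr0.
have /hasP[t tf0 /eqP eq_w] : has (fun t => phi_word s t.2 == w) f0.
  apply: contraT => /hasPn no_t; case: sum_neq0.
  by apply: big1_seq => t /andP[eq_w /no_t]; rewrite eq_w.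
rewrite -eq_w; apply: perm_phi_word; apply: f0_vs0; apply/eqP => coef0; apply: sum_neq0.
rewrite -eq_w -[in RHS]coef0 /coefp big_seq_cond [RHS]big_seq_cond; apply: eq_bigl => t'.
case t'f0: (t' \in f0) => //=; apply/eqP/eqP => [|->//].
exact: phi_word_f0_inj.
Qed.

Lemma f_strong_multilinear : multilinear f_strong.
Proof.
exists f_vars; split; [|exact: f_vars_uniq|exact: coefp_f_strong_neq0].
by rewrite size_cat (leq_trans vs0_gt0) ?leq_addr.
Qed.

Lemma varsp_f_strong v x : evalp mul v f_strong != 0 -> varsp f_strong x = (x \in f_vars).
Proof.
move=> /evalp_neq0_coefp[t tf ct].
exact: varsp_multilinear coefp_f_strong_neq0 tf ct.
Qed.

Lemma phi_eval_ext v (s1 s2 : {perm slot}) :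
  (forall z, v (svar (s1 z) 1) = v (svar (s2 z) 1)) -> phi_eval v s1 = phi_eval v s2.
Proof.
move=> eq_v; apply: eq_bigr => t _; congr (_ *: prodl mul _).
rewrite /phi_word !map_flatten -!map_comp; congr flatten; apply: eq_map => x /=.
rewrite /phi_var; case: pickP => // i _; rewrite !map_cat; congr (_ ++ _).
rewrite /comp_word !map_flatten -!map_comp; congr flatten; apply: eq_map => z /=.
by rewrite eq_v.
Qed.

Lemma evalp_f_strong_alt v c p p' : p != p' -> ss_deg p = ss_deg p' ->
  v (svar (c, p) 1) = v (svar (c, p') 1) -> evalp mul v f_strong = 0.
Proof.
move=> neq_p eq_deg eq_v; rewrite evalp_f_strong.
apply: (sum_sign_perm_eq0 (x := (c, p)) (y := (c, p'))) => // [|s|s].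
- by apply: contra neq_p => /eqP[->].
- by rewrite groupMr // tperm_Sslot.
by apply: phi_eval_ext => z; rewrite permM; case: tpermP => [->|->|].
Qed.

Section StronglyFull.
Variable v : gvar G -> V.
Hypotheses (v_admissible : admissible deg D f_strong v)
           (v_neq0 : evalp mul v f_strong != 0).

Lemma svar_admissible z j : (j < 3)%N ->
  in_basis D (v (svar z j)) /\ v (svar z j) \in deg (slot_deg z.2 j).
Proof. by move=> j_lt; apply: v_admissible; rewrite (varsp_f_strong _ v_neq0) svar_f_vars. Qed.

(* Otherwise every monomial would contain [nJ.+1] variables with values in [J]. *)
Lemma exists_ss_copy : exists c, forall p, in_ss_basis D (v (svar (c, p) 1)).
Proof.
suff /existsP[c /forallP ss_c] :
    [exists c, [forall p, [exists p', v (svar (c, p) 1) == ss_b p']]].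
  by exists c => p; apply/in_ss_basisP.
apply: contraT => /existsPn no_copy.
have J_copy c : exists p, v (svar (c, p) 1) \in J_sp D.
  have /forallPn[p /in_ss_basisP not_ss] := no_copy c; exists p.
  by case: (svar_admissible (c, p) (isT : 1 < 3)%N).1 => [//|[l ->]]; apply: bJ_in_J.
have [pc J_pc] := fin_all_exists J_copy.
case/eqP: v_neq0; rewrite evalp_coefp big1_seq // => u _.
have [cu|/negPn/eqP->] := boolP (coefp f_strong u != 0); last by rewrite scale0r.
rewrite (prodl_nilpotent_count mul_assoc_bilinear J_ideal J_nil) ?scaler0 // count_map.
pose L := [seq svar (c, pc c) 1 | c <- enum 'I_nJ.+1].
have L_uniq : uniq L.
  rewrite map_inj_uniq ?enum_uniq // => c c'.
  by case/(svar_inj (isT : 1 < 3)%N (isT : 1 < 3)%N) => -[].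
have := uniq_leq_size (s2 := filter (preim v (fun x => x \in J_sp D)) u) L_uniq.
rewrite size_map size_enum_ord size_filter; apply => x /mapP[c _ ->].
by rewrite mem_filter /= J_pc (perm_mem (coefp_f_strong_neq0 cu)) svar_f_vars.
Qed.

Lemma ss_copy_inj c : (forall p, in_ss_basis D (v (svar (c, p) 1))) ->
  injective (fun p => v (svar (c, p) 1)).
Proof.
move=> ss_c p p' /= eq_v; apply: contraTeq v_neq0 => neq_p; rewrite negbK; apply/eqP.
have ss_neq0 p1 : v (svar (c, p1) 1) != 0.
  by have /in_ss_basisP/exists_eqP[t ->] := ss_c p1; apply: ss_b_neq0.
have deg_p p1 := (svar_admissible (c, p1) (isT : 1 < 3)%N).2.
apply: (evalp_f_strong_alt neq_p _ eq_v).
by apply: (directv_mem_eq deg_direct (ss_neq0 p)); rewrite // eq_v.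
Qed.

Lemma ss_copy_onto c : (forall p, in_ss_basis D (v (svar (c, p) 1))) ->
  forall t, exists p, v (svar (c, p) 1) = ss_b t.
Proof.
move=> ss_c; pose g p := odflt p [pick t | v (svar (c, p) 1) == ss_b t].
have gP p : v (svar (c, p) 1) = ss_b (g p).
  rewrite /g; case: pickP => [t /eqP //|no_t].
  by have /in_ss_basisP/exists_eqP[t eq_t] := ss_c p; move: (no_t t); rewrite eq_t eqxx.
have g_inj : injective g.
  by move=> p p' eq_g; apply: (ss_copy_inj ss_c); rewrite /= !gP eq_g.
have [g' gK g'K] := injF_bij g_inj.
by move=> t; exists (g' t); rewrite gP g'K.
Qed.

Lemma f_strong_visits i h r s : h \in H i ->
  exists x, varsp f_strong x /\ v x = b i h r s.
Proof.
move=> hH; have [c ss_c] := exists_ss_copy.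
have [p eq_v] := ss_copy_onto ss_c (ss_mk r s hH).
by exists (svar (c, p) 1); rewrite (varsp_f_strong _ v_neq0) svar_f_vars.
Qed.

End StronglyFull.

(* The test makes [vstar] graded everywhere; on the variables of [f_strong]
   it always succeeds. *)
Definition vstar (x : gvar G) : V :=
  let y := if [pick zj : slot * 'I_3 | svar zj.1 zj.2 == x] is Some zj
           then slot_val zj.1.2 zj.2 else v0 x in
  if y \in deg x.2 then y else 0.

Lemma vstar_graded : graded_eval deg vstar.
Proof. by move=> x; rewrite /vstar; case: ifP => // _; rewrite mem0v. Qed.

Lemma vstar_svar z j : (j < 3)%N -> vstar (svar z j) = slot_val z.2 j.
Proof.
move=> j_lt; rewrite /vstar; case: pickP => [[z' j'] /eqP /= eq_svar|]; last first.
  by move/(_ (z, Ordinal j_lt)); rewrite eqxx.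
by have [-> <-] := svar_inj (ltn_ord j') j_lt eq_svar; rewrite slot_val_deg.
Qed.

Lemma vstar_vs0 x : x \in vs0 -> vstar x = v0 x.
Proof.
move=> xvs0; rewrite /vstar; case: pickP => [[z j] /eqP /= eq_x|_].
  by have := svar_fresh z j; rewrite eq_x leqNgt vs0_lt_fresh0.
have x_f0 : varsp f0 x by rewrite varsp_f0.
by have [_ ->] := v0_admissible x_f0.
Qed.

Lemma prodl_phi_word v s w :
  prodl mul (map v (phi_word s w)) = prodl mul [seq prodl mul (map v (phi_var s x)) | x <- w].
Proof.
rewrite /phi_word map_flatten prodl_flatten //; first by rewrite -!map_comp.
apply/allP => l /mapP[y /mapP[x _ ->] ->]; rewrite /phi_var.
case: [pick i | xv i == x] => //= i.
by rewrite map_cat; case: (map v _).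
Qed.

Lemma prodl_phi_var_xv v s i : prodl mul (map v (phi_var s (xv i))) =
  prodl mul ([seq prodl mul (map v (triple s z)) | z <- comp_slots i] ++ [:: v (xv i)]).
Proof.
have -> : phi_var s (xv i) = flatten (map (triple s) (comp_slots i) ++ [:: [:: xv i]]).
  by rewrite /phi_var pick_xv flatten_cat.
rewrite map_flatten prodl_flatten //; first by rewrite !map_cat -!map_comp.
apply/allP => y /mapP[l]; rewrite mem_cat => /orP[/mapP[z _ ->] ->|] //.
by rewrite inE => /eqP-> ->.
Qed.

Lemma phi_eval_coefp v s : phi_eval v s =
  \sum_(u <- undup (map snd f0)) coefp f0 u *: prodl mul (map v (phi_word s u)).
Proof. exact: big_ncpoly_coefp. Qed.

Definition mu (p : ss_elt) : F :=
  al (ss_comp p) 1 (ss_h p) * al (ss_comp p) (ss_h p) (ss_h p)^-1.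

Lemma prodl_triple_id z :
  prodl mul (map vstar (triple 1 z)) = mu z.2 *: b (ss_comp z.2) 1 (rx _) (rx _).
Proof. by rewrite /triple perm1 /= !vstar_svar // ss_triple_id. Qed.

Lemma prodl_triple_eq0 s z : s \in Sslot -> s z != z ->
  prodl mul (map vstar (triple s z)) = 0.
Proof.
move=> /SslotP Ss neq_z; have [eq_c eq_deg] := Ss z.
rewrite /triple /= !vstar_svar //=; apply: ss_triple_eq0 eq_deg.
by apply: contra neq_z => /eqP eq_p; apply/eqP/injective_projections.
Qed.

Lemma phi_eval_vstar_eq0 s : s \in Sslot -> s != 1%g -> phi_eval vstar s = 0.
Proof.
move=> sS s_neq1; have /existsP[z neq_z] : [exists z, s z != z].
  apply: contraR s_neq1 => /existsPn fix_s; apply/eqP/permP => z.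
  by rewrite perm1; apply/eqP/negPn/fix_s.
rewrite phi_eval_coefp big1_seq // => u _.
have [cu|/negPn/eqP->] := boolP (coefp f0 u != 0); last by rewrite scale0r.
rewrite prodl_phi_word (prodl_eq0 mul_assoc_bilinear) ?scaler0 //.
apply/mapP; exists (xv (ss_comp z.2)); first by rewrite (perm_mem (f0_vs0 cu)) xv_vs0.
rewrite prodl_phi_var_xv (prodl_eq0 mul_assoc_bilinear) // mem_cat; apply/orP; left.
by apply/mapP; exists z; rewrite ?prodl_triple_eq0 // mem_filter eqxx mem_enum.
Qed.

Definition kappa (x : gvar G) : F :=
  if [pick i | xv i == x] is Some i
  then (\prod_(z <- comp_slots i) mu z.2) * al i 1 (hx i) ^+ size (comp_slots i)
  else 1.

Lemma kappa_neq0 x : kappa x != 0.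
Proof.
rewrite /kappa; case: pickP => [i _|_]; last exact: oner_neq0.
rewrite mulf_neq0 ?expf_neq0 ?alpha_neq0 ?group1 //.
rewrite prodf_seq_neq0; apply/allP => z _ /=.
by rewrite mulf_neq0 // alpha_neq0 ?group1 ?groupV ?ss_hP.
Qed.

Lemma prodl_phi_var_vstar1 x : x \in vs0 ->
  prodl mul (map vstar (phi_var 1 x)) = kappa x *: v0 x.
Proof.
move=> xvs0; rewrite /kappa; case: pickP => [i /eqP eq_x|no_i]; last first.
  by rewrite /phi_var; case: pickP => [i|]; rewrite ?no_i //= vstar_vs0 // scale1r.
rewrite -eq_x prodl_phi_var_xv vstar_vs0 ?xv_vs0 // v0_xv.
have -> : [seq prodl mul (map vstar (triple 1 z)) | z <- comp_slots i] =
          [seq c *: b i 1 (rx i) (rx i) | c <- [seq mu z.2 | z <- comp_slots i]].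
  rewrite -map_comp; apply/eq_in_map => z; rewrite mem_filter => /andP[/eqP eq_i _].
  by rewrite [LHS]prodl_triple_id -eq_i.
by rewrite prodl_b_idem ?hx_in // big_map size_map.
Qed.

Lemma phi_eval_vstar1 : phi_eval vstar 1 = (\prod_(x <- vs0) kappa x) *: evalp mul v0 f0.
Proof.
rewrite phi_eval_coefp evalp_coefp scaler_sumr; apply: eq_big_seq => u _.
have [cu|/negPn/eqP->] := boolP (coefp f0 u != 0); last by rewrite !scale0r scaler0.
have u_vs0 := f0_vs0 cu; rewrite scalerA mulrC -scalerA; congr (_ *: _).
rewrite prodl_phi_word -(perm_big _ u_vs0) -prodl_scale //; congr (prodl mul _).
by apply/eq_in_map => x xu; rewrite prodl_phi_var_vstar1 // -(perm_mem u_vs0).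
Qed.

Lemma f_strong_nonidentity : nonidentity mul deg f_strong.
Proof.
exists vstar; split; first exact: vstar_graded.
rewrite evalp_f_strong (bigD1 1%g) ?group1 //= big1 => [|s /andP[sS s_neq1]]; last first.
  by rewrite phi_eval_vstar_eq0 ?scaler0.
rewrite addr0 /sgn odd_perm1 expr0 scale1r phi_eval_vstar1 scaler_eq0 negb_or v0_f0_neq0.
by rewrite andbT prodf_seq_neq0; apply/allP => x _; apply: kappa_neq0.
Qed.

Lemma wdeg_triple s z : s \in Sslot -> wdeg (triple s z) = 1%g.
Proof.
move=> /SslotP Ss; rewrite /triple /wdeg /= (Ss z).2 /ss_deg mulg1.
by rewrite !mulgA !mulgK mulVg.
Qed.

Lemma wdeg_phi_var s x : s \in Sslot -> wdeg (phi_var s x) = x.2.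
Proof.
move=> sS; rewrite /phi_var; case: pickP => [i _|_] /=; last by rewrite mulg1.
rewrite wdeg_cat /= mulg1 wdeg_flatten_eq1 ?mul1g // => w /mapP[z _ ->].
exact: wdeg_triple.
Qed.

Lemma phi_graded s : s \in Sslot -> graded_subst (phi s).
Proof.
move=> sS x; split=> [w|]; rewrite /coefp /phi big_cons big_nil /= addr0.
  by have [<- _|_] := eqVneq (phi_var s x) w; [rewrite wdeg_phi_var | rewrite eqxx].
have [|//] := eqVneq (phi_var s x) [::]; rewrite /phi_var.
by case: [pick i | xv i == x] => //= i; case: comp_word.
Qed.

Lemma f_strong_in_Tideal : in_Tideal f0 f_strong.
Proof.
exists #|Sslot|, (fun j => sgn (enum_val j)), (fun _ => [::]), (fun _ => [::]),
  (fun j => phi (enum_val j)); split=> // j.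
exact/phi_graded/enum_valP.
Qed.

Lemma f_strong_spec :
  [/\ multilinear f_strong, strongly_full mul deg D f_strong & in_Tideal f0 f_strong].
Proof.
split; [exact: f_strong_multilinear | split | exact: f_strong_in_Tideal].
  exact: f_strong_nonidentity.
by move=> v v_adm v_neq0 i h r s; apply: f_strong_visits.
Qed.

End Construction.
End WMBasis.

Unset Implicit Arguments.

Theorem proposition4p2 (F : closedFieldType) (G : finGroupType) (V : vectType F)
    (mul : V -> V -> V) (deg : G -> {vspace V}) (D : WMdata F G V)
    (f0 : ncpoly F G) :
  [pchar F] =i pred0 ->
  graded_algebra mul deg ->
  graded_WM mul deg D ->
  full mul D ->
  multilinear f0 ->
  weakly_full mul deg D f0 ->
  exists f : ncpoly F G,
    [/\ multilinear f, strongly_full mul deg D f & in_Tideal f0 f].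
Proof.
move=> charF0 A_graded A_WM _ [vs0 [vs0_gt0 vs0_uniq f0_vs0]].
move=> [v0 [v0_adm v0_neq0 v0_visits]].
have [nJ J_nil] : nilpotent_sp mul (J_sp D).
  by case: A_WM => _ [_ [_ [_ [_ [_ [_ [_ J_nil _]]]]]]].
have /fin_all_exists[xr xrP] :
    forall i, exists t : gvar G * G * 'I_(wm_k D i) * 'I_(wm_k D i),
    [/\ varsp f0 t.1.1.1, t.1.1.2 \in wm_H D i & v0 t.1.1.1 = wm_b D i t.1.1.2 t.1.2 t.2].
  by move=> i; have [x [x_f0 [h [r [s [hH eq_v]]]]]] := v0_visits i; exists (x, h, r, s).
exists (f_strong nJ f0 (fun i => (xr i).1.1.1) (fun i => (xr i).1.2)).
apply: (f_strong_spec (hx := fun i => (xr i).1.1.2) (sx := fun i => (xr i).2) A_graded A_WM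
          charF0 J_nil vs0_gt0 vs0_uniq f0_vs0 v0_adm v0_neq0) => i; by case: (xrP i).
Qed.
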